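(* Let $t,\Delta\in\mathbb{N}$. If $A$ $(t,\Delta)$-approximates $B$ and $B$ $(t,\Delta)$-approximates $C$, then $A$ $(t,\Delta)$-approximates $C$.
   Context: $\mathbb{N}=\{0,1,2,\dots\}$, $[t]=\{0,1,\dots,t\}$. For $A\subseteq[t]$ and $b\in\mathbb{N}$ define $\mathrm{apx}^-_t(b,A)=\max\{a\in A\cup\{t+1\}: a\le b\}$ and $\mathrm{apx}^+_t(b,A)=\min\{a\in A\cup\{t+1\}: a\ge b\}$, with $\max\emptyset=-\infty$, $\min\emptyset=\infty$. For $A,B\subseteq\mathbb{N}$, $A$ $(t,\Delta)$-approximates $B$ if $A\subseteq B\subseteq[t]$ and for every $b\in B$, $\mathrm{apx}^+_t(b,A)-\mathrm{apx}^-_t(b,A)\le\Delta$. *)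

From Stdlib Require Import Arith ZArith Lia.

Definition ext (t : nat) (A : nat -> Prop) (a : nat) : Prop := A a \/ a = S t.

(* apx^-_t(b,A) = m, where None encodes -infinity (max of the empty set). *)
Definition apx_minus (t : nat) (A : nat -> Prop) (b : nat) (m : option nat) : Prop :=
  match m with
  | Some a => ext t A a /\ a <= b /\ (forall a', ext t A a' -> a' <= b -> a' <= a)
  | None => forall a', ext t A a' -> ~ a' <= b
  end.

(* apx^+_t(b,A) = p, where None encodes +infinity (min of the empty set). *)
Definition apx_plus (t : nat) (A : nat -> Prop) (b : nat) (p : option nat) : Prop :=
  match p with
  | Some a => ext t A a /\ b <= a /\ (forall a', ext t A a' -> b <= a' -> a <= a')
  | None => forall a', ext t A a' -> ~ b <= a'
  end.

(* p - m <= Delta in the extended integers (with p = +oo or m = -oo the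
   difference is +oo, which is never <= Delta); the difference is an integer. *)
Definition ediff_le (p m : option nat) (Delta : nat) : Prop :=
  match p, m with
  | Some a, Some c => (Z.of_nat a - Z.of_nat c <= Z.of_nat Delta)%Z
  | _, _ => False
  end.

Definition approximates (t Delta : nat) (A B : nat -> Prop) : Prop :=
  (forall x, A x -> B x) /\
  (forall x, B x -> x <= t) /\
  (forall b, B b -> exists m p,
      apx_minus t A b m /\ apx_plus t A b p /\ ediff_le p m Delta).

(** It suffices to exhibit, around each [c], two points of [A ∪ {t+1}]
    at distance at most [Δ] enclosing [c]: the true predecessor and
    successor of [c] then lie in between.  Let [m ≤ c ≤ p] be the
    neighbours of [c] in [B ∪ {t+1}], so [p - m ≤ Δ].  Take such enclosing
    pairs [a1 ≤ m ≤ a2] and [a1' ≤ p ≤ a2'] from [A].  As [A ⊆ B], the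
    point [a2] is not strictly between [m] and [p]; so either [a2 ≥ p] and
    [(a1, a2)] encloses [c], or [a2 = m] lies in [A].  Symmetrically
    [(a1', a2')] encloses [c] or [p] lies in [A]; in the remaining case
    [(m, p)] itself encloses [c]. *)

From Stdlib Require Import Arith Lia.
From Stdlib Require Import Classical.

Definition brackets (Delta : nat) (S : nat -> Prop) (b : nat) : Prop :=
  exists a1 a2, S a1 /\ S a2 /\ a1 <= b <= a2 /\ a2 <= a1 + Delta.

Lemma brackets_mem (Delta : nat) (S : nat -> Prop) (b : nat) :
  S b -> brackets Delta S b.
Proof. intros Hb; exists b, b; repeat split; auto; lia. Qed.

Lemma brackets_in_gap (Delta : nat) (S T : nat -> Prop) (m c p : nat) :
  (forall x, S x -> T x) ->
  m <= c <= p -> p <= m + Delta ->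
  (forall x, T x -> x <= m \/ p <= x) ->
  brackets Delta S m -> brackets Delta S p -> brackets Delta S c.
Proof.
  intros HST Hmcp Hpm Hgap [a1 [a2 [Ha1 [Ha2 [Hm Ha]]]]]
         [a1' [a2' [Ha1' [Ha2' [Hp Ha']]]]].
  destruct (Hgap a2 (HST a2 Ha2)) as [Ha2m | Hpa2].
  - destruct (Hgap a1' (HST a1' Ha1')) as [Ha1'm | Hpa1'].
    + exists a1', a2'; repeat split; auto; lia.
    + exists a2, a1'; repeat split; auto; lia.
  - exists a1, a2; repeat split; auto; lia.
Qed.

Lemma exists_max_le (P : nat -> Prop) (n b : nat) :
  P n -> n <= b -> exists m, P m /\ m <= b /\ (forall k, P k -> k <= b -> k <= m).
Proof.
  intros Hn. induction b as [|b IH]; intros Hnb.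
  - exists n; split; [auto | split; [auto | intros; lia]].
  - destruct (classic (P (S b))) as [HSb | HSb].
    + exists (S b); split; [auto | split; [auto | intros; lia]].
    + assert (Hnb' : n <= b) by (destruct (Nat.eq_dec n (S b)); subst; [contradiction | lia]).
      destruct (IH Hnb') as [m [Hm [Hmb Hmax]]].
      exists m; split; [auto | split; [lia |]].
      intros k Hk Hkb. destruct (Nat.eq_dec k (S b)); subst; [contradiction |].
      apply Hmax; auto; lia.
Qed.

Lemma exists_min_ge (P : nat -> Prop) (n b : nat) :
  P n -> b <= n -> exists m, P m /\ b <= m /\ (forall k, P k -> b <= k -> m <= k).
Proof.
  intros Hn Hbn.
  destruct (dec_inh_nat_subset_has_unique_least_element (fun k => P k /\ b <= k))
    as [m [[[Hm Hbm] Hmin] _]].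
  - intros k; apply classic.
  - exists n; auto.
  - exists m; split; [auto | split; [auto |]].
    intros k Hk Hbk; apply Hmin; auto.
Qed.

Lemma apx_iff_brackets (t Delta : nat) (A : nat -> Prop) (b : nat) :
  (exists m p, apx_minus t A b m /\ apx_plus t A b p /\ ediff_le p m Delta) <->
  brackets Delta (ext t A) b.
Proof.
  split.
  - intros [[m|] [[p|] [Hm [Hp Hd]]]]; simpl in Hd; try contradiction.
    destruct Hm as [Hm [Hmb _]], Hp as [Hp [Hbp _]].
    exists m, p; repeat split; auto; lia.
  - intros [a1 [a2 [Ha1 [Ha2 [[Ha1b Hba2] Ha]]]]].
    destruct (exists_max_le (ext t A) a1 b Ha1 Ha1b) as [m [Hm [Hmb Hmax]]].
    destruct (exists_min_ge (ext t A) a2 b Ha2 Hba2) as [p [Hp [Hbp Hmin]]].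
    assert (a1 <= m) by auto.
    assert (p <= a2) by auto.
    exists (Some m), (Some p); simpl; repeat split; auto; lia.
Qed.

Lemma approximates_brackets (t Delta : nat) (A B : nat -> Prop) (b : nat) :
  approximates t Delta A B -> ext t B b -> brackets Delta (ext t A) b.
Proof.
  intros [_ [_ HA]] [Hb | Hb].
  - apply apx_iff_brackets; auto.
  - apply brackets_mem; right; auto.
Qed.

Theorem lemma4p2 (t Delta : nat) (A B C : nat -> Prop) :
  approximates t Delta A B -> approximates t Delta B C -> approximates t Delta A C.
Proof.
  intros HAB [HBC [HCt HB]].
  pose proof (proj1 HAB) as HAsubB.
  split; [auto | split; [auto |]].
  intros c Hc. apply apx_iff_brackets.
  destruct (HB c Hc) as [[m|] [[p|] [Hm [Hp Hd]]]]; simpl in Hd; try contradiction.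
  destruct Hm as [Hm [Hmc Hmax]], Hp as [Hp [Hcp Hmin]].
  apply (brackets_in_gap Delta (ext t A) (ext t B) m c p).
  - intros x [Hx | Hx]; [left | right]; auto.
  - lia.
  - lia.
  - intros x Hx. destruct (Nat.le_ge_cases x c); [left | right]; auto.
  - apply (approximates_brackets t Delta A B); auto.
  - apply (approximates_brackets t Delta A B); auto.
Qed.
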